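(* Let $W\subseteq C^\omega$ be a prefix-independent objective, $\kappa$ a cardinal, and $U$ a $C$-graph which is almost $(\kappa,W)$-universal. Then the $C$-graph $U\ltimes\kappa$ is $(\kappa,W)$-universal for prefix-independent objectives.
   Context: A $C$-pregraph: vertex set $V(G)$, edges $E(G)\subseteq V(G)\times C\times V(G)$ written $v\xrightarrow{c}v'$; a $C$-graph if every vertex has an outgoing edge. A $C$-pretree is a $C$-pregraph with root $t_0$ such that every vertex has a unique path from $t_0$; for a vertex $t$, $T[t]$ is the restriction of $T$ to vertices reachable from $t$. A morphism maps vertices so that $v\xrightarrow{c}v'$ implies $\phi(v)\xrightarrow{c}\phi(v')$. A (pre)graph satisfies $W$ if every infinite path from every vertex has colour sequence in $W$. $W$ is prefix-independent if $uw\in W\iff w\in W$ for all $u\in C^*,w\in C^\omega$. $U$ is almost $(\kappa,W)$-universal if $U$ satisfies $W$ and every $C$-pretree $T$ of cardinality $<\kappa$ satisfying $W$ has a vertex $t$ such that $T[t]$ admits a morphism into $U$. $U$ is $(\kappa,W)$-universal for prefix-independent objectives if $U$ satisfies $W$ and every $C$-pretree of cardinality $<\kappa$ satisfying $W$ admits a morphism into $U$. For an ordinal $\alpha$, $U\ltimes\alpha$ is the graph with vertex set $V(U)\times\alpha$ and edges $(v,\lambda)\xrightarrow{c}(v',\lambda')$ whenever $\lambda>\lambda'$, or $\lambda=\lambda'$ and $v\xrightarrow{c}v'\in E(U)$. *)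

From Stdlib Require Import List.
Import ListNotations.
Set Implicit Arguments.

Section Graphs.
Variable C : Type.

Definition is_graph (V : Type) (E : V -> C -> V -> Prop) : Prop :=
  forall v, exists c v', E v c v'.

(** finite paths: [fpath E v l w] : l is the list of (colour, target) of the
    successive edges of a path from v to w *)
Inductive fpath (V : Type) (E : V -> C -> V -> Prop) : V -> list (C * V) -> V -> Prop :=
| fpath_nil : forall v, fpath E v [] v
| fpath_cons : forall v c v' l w, E v c v' -> fpath E v' l w -> fpath E v ((c, v') :: l) w.

Definition reachable (V : Type) (E : V -> C -> V -> Prop) (v w : V) : Prop :=
  exists l, fpath E v l w.

Definition is_pretree (V : Type) (E : V -> C -> V -> Prop) (t0 : V) : Prop :=
  forall t, exists l, fpath E t0 l t /\ forall l', fpath E t0 l' t -> l' = l.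

Definition sub_vert (V : Type) (E : V -> C -> V -> Prop) (t : V) : Type :=
  { v : V | reachable E t v }.

Definition sub_edge (V : Type) (E : V -> C -> V -> Prop) (t : V)
  (x : sub_vert E t) (c : C) (y : sub_vert E t) : Prop :=
  E (proj1_sig x) c (proj1_sig y).

Definition is_morphism (V1 V2 : Type) (E1 : V1 -> C -> V1 -> Prop)
  (E2 : V2 -> C -> V2 -> Prop) (f : V1 -> V2) : Prop :=
  forall v c v', E1 v c v' -> E2 (f v) c (f v').

Definition has_morphism (V1 V2 : Type) (E1 : V1 -> C -> V1 -> Prop)
  (E2 : V2 -> C -> V2 -> Prop) : Prop :=
  exists f : V1 -> V2, is_morphism E1 E2 f.

Definition satisfies (V : Type) (E : V -> C -> V -> Prop) (W : (nat -> C) -> Prop) : Prop :=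
  forall (v : nat -> V) (c : nat -> C), (forall n, E (v n) (c n) (v (S n))) -> W c.

Fixpoint prepend (u : list C) (w : nat -> C) : nat -> C :=
  match u with
  | [] => w
  | a :: u' => fun n => match n with 0 => a | S m => prepend u' w m end
  end.

Definition prefix_independent (W : (nat -> C) -> Prop) : Prop :=
  forall (u : list C) (w : nat -> C), W (prepend u w) <-> W w.

End Graphs.

(** Cardinals: a cardinal kappa is represented as an initial ordinal, i.e. a type K
    with a strict well-order ltK such that no proper initial segment is
    equinumerous with (injects) K. *)
Definition injective {A B : Type} (f : A -> B) : Prop := forall x y, f x = f y -> x = y.

Definition is_cardinal (K : Type) (ltK : K -> K -> Prop) : Prop :=
  (forall x y z, ltK x y -> ltK y z -> ltK x z) /\
  (forall x y, ltK x y \/ x = y \/ ltK y x) /\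
  well_founded ltK /\
  (forall k : K, ~ exists f : K -> { x : K | ltK x k }, injective f).

Definition card_lt (V K : Type) : Prop :=
  (exists f : V -> K, injective f) /\ ~ (exists g : K -> V, injective g).

Definition lex_prod (C VU K : Type) (EU : VU -> C -> VU -> Prop) (ltK : K -> K -> Prop)
  (x : VU * K) (c : C) (y : VU * K) : Prop :=
  ltK (snd y) (snd x) \/ (snd x = snd y /\ EU (fst x) c (fst y)).

Definition almost_universal (C K VU : Type) (W : (nat -> C) -> Prop)
  (ltK : K -> K -> Prop) (EU : VU -> C -> VU -> Prop) : Prop :=
  satisfies EU W /\
  forall (V : Type) (E : V -> C -> V -> Prop) (t0 : V),
    is_pretree E t0 -> card_lt V K -> satisfies E W ->
    exists t : V, has_morphism (@sub_edge C V E t) EU.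

Definition universal_pi (C K VU : Type) (W : (nat -> C) -> Prop)
  (ltK : K -> K -> Prop) (EU : VU -> C -> VU -> Prop) : Prop :=
  satisfies EU W /\
  forall (V : Type) (E : V -> C -> V -> Prop) (t0 : V),
    is_pretree E t0 -> card_lt V K -> satisfies E W ->
    has_morphism E EU.

From Stdlib Require Import List Arith Classical ClassicalEpsilon
  FunctionalExtensionality PropExtensionality.
Import ListNotations.
Set Implicit Arguments.

(* Satisfaction: along a path of [U ⋉ κ] the ordinal component never increases, so it
   is eventually constant; from then on the path is a path of [U], and
   prefix-independence lets us forget the finite prefix.

   Universality: peel the pretree [T] in stages.  If [S] is the successor-closed set of
   vertices already handled, the remaining vertices form a pretree of size [< κ]
   satisfying [W], so almost-universality provides a subtree of it (a layer) mapping
   into [U].  Stage [k] is the union of the layers cut at the stages [j < k], and a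
   vertex of the layer cut at stage [k] is sent to (its image in [U], k).  Edges never
   lead to a later stage, and inside one stage they are edges of [U].  Every vertex
   lies in some layer: otherwise the layers would be [κ] pairwise disjoint nonempty
   sets, and [κ] would inject into [T]. *)

Lemma proj1_sig_injective (A : Type) (P : A -> Prop) : injective (@proj1_sig A P).
Proof.
  intros [x hx] [y hy]; simpl; intros <-.
  f_equal; apply proof_irrelevance.
Qed.

Lemma map_injective (A B : Type) (f : A -> B) :
  injective f -> forall l1 l2, map f l1 = map f l2 -> l1 = l2.
Proof.
  intros Hf l1; induction l1 as [|a l1 IH]; intros [|b l2] H; try discriminate; auto.
  simpl in H; injection H as Hab Hl.
  f_equal; [apply Hf | apply IH]; assumption.
Qed.

Lemma extend_along_injective (A B X : Type) (i : A -> X) (f : A -> B) (a0 : A) :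
  injective i -> exists g : X -> B, forall a, g (i a) = f a.
Proof.
  intros Hi.
  exists (fun x => f (epsilon (inhabits a0) (fun a => i a = x))).
  intro a; f_equal; apply Hi.
  exact (epsilon_spec (inhabits a0) (fun b => i b = i a) (ex_intro _ a eq_refl)).
Qed.

Lemma well_founded_irrefl (K : Type) (ltK : K -> K -> Prop) :
  well_founded ltK -> forall k, ~ ltK k k.
Proof.
  intros Hwf k; induction (Hwf k) as [k _ IH]; intro Hk.
  exact (IH k Hk Hk).
Qed.

Section InducedSubgraphs.
Variables (C V : Type) (E : V -> C -> V -> Prop).

Definition successor_closed (S : V -> Prop) : Prop :=
  forall v c w, E v c w -> S v -> S w.

Definition predecessor_closed (P : V -> Prop) : Prop :=
  forall v c w, E v c w -> P w -> P v.

Definition induced (P : V -> Prop) (x : {v | P v}) (c : C) (y : {v | P v}) : Prop :=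
  E (proj1_sig x) c (proj1_sig y).

Definition label_val (P : V -> Prop) (e : C * {v | P v}) : C * V :=
  (fst e, proj1_sig (snd e)).

Lemma label_val_injective (P : V -> Prop) : injective (label_val P).
Proof.
  intros [c x] [c' x'] H; injection H as -> Hx.
  f_equal; exact (proj1_sig_injective _ _ Hx).
Qed.

Lemma fpath_rcons x l y c z : fpath E x l y -> E y c z -> fpath E x (l ++ [(c, z)]) z.
Proof.
  induction 1; intros; simpl; econstructor; eauto using fpath_nil.
Qed.

Lemma fpath_predecessor_closed (P : V -> Prop) x l y :
  predecessor_closed P -> fpath E x l y -> P y -> P x.
Proof. intros HP; induction 1; eauto. Qed.

Lemma fpath_induced_val (P : V -> Prop) x l y :
  fpath (induced P) x l y -> fpath E (proj1_sig x) (map (label_val P) l) (proj1_sig y).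
Proof. induction 1; simpl; econstructor; eauto. Qed.

Lemma fpath_induced_lift (P : V -> Prop) x l y (hx : P x) (hy : P y) :
  predecessor_closed P -> fpath E x l y ->
  exists l', fpath (induced P) (exist _ x hx) l' (exist _ y hy) /\
             map (label_val P) l' = l.
Proof.
  intros HP Hxy; revert hx hy; induction Hxy as [x | x c x' l y Hx Hx'y IH]; intros hx hy.
  - rewrite (proof_irrelevance _ hx hy); exists []; split; constructor.
  - assert (hx' : P x') by exact (fpath_predecessor_closed HP Hx'y hy).
    destruct (IH hx' hy) as [l' [Hl' Hmap]].
    exists ((c, exist _ x' hx') :: l'); split.
    + econstructor; [exact Hx | exact Hl'].
    + simpl; rewrite Hmap; reflexivity.
Qed.

Lemma is_pretree_induced (P : V -> Prop) t0 (h0 : P t0) :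
  predecessor_closed P -> is_pretree E t0 -> is_pretree (induced P) (exist _ t0 h0).
Proof.
  intros HP Htree [x hx].
  destruct (Htree x) as [l [Hl Huniq]].
  destruct (fpath_induced_lift h0 hx HP Hl) as [l' [Hl' Hmap]].
  exists l'; split; [exact Hl' |].
  intros l'' Hl''.
  apply (map_injective (@label_val_injective P)).
  rewrite Hmap; exact (Huniq _ (fpath_induced_val Hl'')).
Qed.

Lemma satisfies_induced (W : (nat -> C) -> Prop) (P : V -> Prop) :
  satisfies E W -> satisfies (induced P) W.
Proof. intros HW x c Hx; exact (HW (fun n => proj1_sig (x n)) c Hx). Qed.

Lemma card_lt_sig (K : Type) (P : V -> Prop) : card_lt V K -> card_lt {v | P v} K.
Proof.
  intros [[f Hf] HKV]; split.
  - exists (fun x => f (proj1_sig x)).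
    intros x y Hxy; exact (proj1_sig_injective _ _ (Hf _ _ Hxy)).
  - intros [g Hg]; apply HKV.
    exists (fun k => proj1_sig (g k)).
    intros j k Hjk; exact (Hg _ _ (proj1_sig_injective _ _ Hjk)).
Qed.

End InducedSubgraphs.

Lemma prefix_independent_shift (C : Type) (W : (nat -> C) -> Prop) :
  prefix_independent W -> forall N c, W (fun n => c (N + n)) -> W c.
Proof.
  intros Hpi N; induction N as [|N IH]; intros c Hc; [exact Hc |].
  assert (Htail : W (fun n => c (S n))) by exact (IH (fun n => c (S n)) Hc).
  replace c with (prepend [c 0] (fun n => c (S n))).
  - exact (proj2 (Hpi _ _) Htail).
  - apply functional_extensionality; intros [|n]; reflexivity.
Qed.

Lemma wf_nonincreasing_stabilizes (K : Type) (ltK : K -> K -> Prop) (k : nat -> K) :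
  well_founded ltK -> (forall n, k (S n) = k n \/ ltK (k (S n)) (k n)) ->
  exists N, forall n, k (N + n) = k N.
Proof.
  intros Hwf Hk.
  enough (Hstab : forall a n, k n = a -> exists N, forall m, k (N + m) = k N)
    by exact (Hstab (k 0) 0 eq_refl).
  intro a; induction a as [a IH] using (well_founded_induction Hwf); intros n Hn.
  destruct (classic (exists m, ltK (k (n + m)) a)) as [[m Hm] | Hno].
  - exact (IH _ Hm (n + m) eq_refl).
  - assert (Hconst : forall m, k (n + m) = a).
    { induction m as [|m IHm]; [rewrite Nat.add_0_r; exact Hn |].
      rewrite Nat.add_succ_r.
      destruct (Hk (n + m)) as [H | H]; [rewrite H; exact IHm |].
      exfalso; apply Hno; exists (S m).
      rewrite Nat.add_succ_r, <- IHm; exact H. }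
    exists n; intro m.
    rewrite Hconst, <- (Hconst 0), Nat.add_0_r; reflexivity.
Qed.

Lemma satisfies_lex_prod (C K VU : Type) (W : (nat -> C) -> Prop) (ltK : K -> K -> Prop)
  (EU : VU -> C -> VU -> Prop) :
  prefix_independent W -> well_founded ltK -> satisfies EU W ->
  satisfies (lex_prod EU ltK) W.
Proof.
  intros Hpi Hwf HW x c Hx.
  destruct (wf_nonincreasing_stabilizes (fun n => snd (x n)) Hwf) as [N HN].
  { intro n; destruct (Hx n) as [H | [H _]]; [right | left]; auto. }
  apply (prefix_independent_shift Hpi N).
  apply (HW (fun n => fst (x (N + n)))); intro n; simpl.
  destruct (Hx (N + n)) as [H | [_ H]]; rewrite <- Nat.add_succ_r in H; [| exact H].
  rewrite !HN in H.
  destruct (well_founded_irrefl Hwf _ H).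
Qed.

Section Layers.
Variables (C V VU : Type) (E : V -> C -> V -> Prop) (EU : VU -> C -> VU -> Prop).

Record is_layer (S D : V -> Prop) (g : V -> VU) : Prop := {
  layer_disjoint : forall {v}, D v -> ~ S v;
  layer_nonempty : successor_closed E S -> (exists v, ~ S v) -> exists v, D v;
  layer_closed : forall {v c w}, D v -> E v c w -> ~ S w -> D w;
  layer_morphism : forall {v c w}, D v -> D w -> E v c w -> EU (g v) c (g w) }.

Variables (K : Type) (ltK : K -> K -> Prop) (W : (nat -> C) -> Prop) (t0 : V).
Hypotheses (HU : almost_universal W ltK EU) (Htree : is_pretree E t0)
  (HVK : card_lt V K) (HW : satisfies E W).

Lemma layer_exists (S : V -> Prop) :
  successor_closed E S -> (exists v, ~ S v) -> exists D g, is_layer S D g.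
Proof.
  intros HS [v0 Hv0].
  pose (P := fun v => ~ S v).
  assert (HP : predecessor_closed E P).
  { intros v c w Hvw Hw Hv; exact (Hw (HS _ _ _ Hvw Hv)). }
  assert (h0 : P t0).
  { destruct (Htree v0) as [l [Hl _]]; exact (fpath_predecessor_closed HP Hl Hv0). }
  destruct (proj2 HU _ _ _ (is_pretree_induced h0 HP Htree) (card_lt_sig P HVK)
              (satisfies_induced P HW)) as [t [f Hf]].
  pose (i := fun x : sub_vert (induced E P) t => proj1_sig (proj1_sig x)).
  assert (Hi : injective i).
  { intros x y Hxy; apply proj1_sig_injective, proj1_sig_injective; exact Hxy. }
  pose (root := exist (fun x => reachable (induced E P) t x) t
                      (ex_intro _ [] (fpath_nil _ t))).
  destruct (extend_along_injective f root Hi) as [g Hg].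
  exists (fun v => exists x, i x = v), g; constructor.
  - intros v [x <-]; exact (proj2_sig (proj1_sig x)).
  - intros _ _; exists (i root), root; reflexivity.
  - intros v c w [[[v' hv'] [l Hl]] Hv] Hvw Hw; change (v' = v) in Hv; subst v'.
    assert (Hedge : induced E P (exist P v hv') c (exist P w Hw)) by exact Hvw.
    exists (exist _ (exist P w Hw) (ex_intro _ _ (fpath_rcons c _ Hl Hedge))).
    reflexivity.
  - intros v c w [x <-] [y <-] Hxy.
    rewrite !Hg; exact (Hf _ _ _ Hxy).
Qed.

Lemma layering_exists :
  exists (layer : (V -> Prop) -> V -> Prop) (psi : (V -> Prop) -> V -> VU),
    forall S, is_layer S (layer S) (psi S).
Proof.
  assert (HVU : inhabited VU).
  { assert (Hempty : successor_closed E (fun _ => False)) by (intros ? ? ? _ []).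
    destruct (layer_exists Hempty (ex_intro _ t0 (fun H => H))) as [_ [g _]].
    exact (inhabits (g t0)). }
  destruct HVU as [u0].
  assert (Hlayer : forall S,
            exists p : (V -> Prop) * (V -> VU), is_layer S (fst p) (snd p)).
  { intro S.
    destruct (classic (successor_closed E S /\ exists v, ~ S v)) as [[HS Hne] | Hdeg].
    - destruct (layer_exists HS Hne) as [D [g HDg]]; exists (D, g); exact HDg.
    - exists (fun _ => False, fun _ => u0); constructor; simpl; tauto. }
  destruct (choice _ Hlayer) as [F HF].
  exists (fun S => fst (F S)), (fun S => snd (F S)); exact HF.
Qed.

End Layers.

Section Stratification.
Variables (C V K VU : Type) (E : V -> C -> V -> Prop) (ltK : K -> K -> Prop)
  (EU : VU -> C -> VU -> Prop).
Hypotheses (ltK_trans : forall x y z, ltK x y -> ltK y z -> ltK x z)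
  (ltK_total : forall x y, ltK x y \/ x = y \/ ltK y x) (ltK_wf : well_founded ltK).
Variables (layer : (V -> Prop) -> V -> Prop) (psi : (V -> Prop) -> V -> VU).
Hypothesis layerP : forall S, is_layer E EU S (layer S) (psi S).

Definition stage : K -> V -> Prop :=
  Fix ltK_wf (fun _ => V -> Prop)
    (fun k stage_below v => exists j (h : ltK j k), layer (stage_below j h) v).

Lemma stageE k v : stage k v <-> exists j, ltK j k /\ layer (stage j) v.
Proof.
  unfold stage at 1; rewrite Fix_eq.
  - split; intros [j [h H]]; eauto.
  - intros k' f g Hfg; apply functional_extensionality; intro u.
    apply propositional_extensionality.
    split; intros [j [h H]]; exists j, h; [rewrite <- Hfg | rewrite Hfg]; exact H.
Qed.

Lemma layer_sub_stage {j k v} : ltK j k -> layer (stage j) v -> stage k v.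
Proof. intros Hjk Hv; apply stageE; eauto. Qed.

Lemma stage_mono {j k v} : ltK j k -> stage j v -> stage k v.
Proof.
  intros Hjk Hv; apply stageE in Hv as [i [Hij Hv]].
  exact (layer_sub_stage (ltK_trans Hij Hjk) Hv).
Qed.

Lemma layer_edge_stage {j k v c w} :
  ltK j k -> layer (stage j) v -> E v c w -> stage k w.
Proof.
  intros Hjk Hv Hvw.
  destruct (classic (stage j w)) as [Hw | Hw].
  - exact (stage_mono Hjk Hw).
  - exact (layer_sub_stage Hjk (layer_closed (layerP _) Hv Hvw Hw)).
Qed.

Lemma stage_successor_closed k : successor_closed E (stage k).
Proof.
  intros v c w Hvw Hv; apply stageE in Hv as [j [Hjk Hv]].
  exact (layer_edge_stage Hjk Hv Hvw).
Qed.

Lemma layers_disjoint {j k v} : layer (stage j) v -> layer (stage k) v -> j = k.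
Proof.
  intros Hj Hk.
  destruct (ltK_total j k) as [H | [H | H]]; [exfalso | exact H | exfalso].
  - exact (layer_disjoint (layerP _) Hk (layer_sub_stage H Hj)).
  - exact (layer_disjoint (layerP _) Hj (layer_sub_stage H Hk)).
Qed.

Lemma layer_edge_level {j k v c w} :
  layer (stage j) v -> E v c w -> layer (stage k) w -> ~ ltK j k.
Proof.
  intros Hv Hvw Hw Hjk.
  exact (layer_disjoint (layerP _) Hw (layer_edge_stage Hjk Hv Hvw)).
Qed.

Hypothesis K_not_into_V : ~ exists g : K -> V, injective g.

Lemma layer_cover v : exists k, layer (stage k) v.
Proof.
  apply NNPP; intro Hv.
  assert (Hout : forall k, ~ stage k v).
  { intros k Hk; apply stageE in Hk as [j [_ Hj]]; eauto. }
  assert (Hne : forall k, exists u, layer (stage k) u).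
  { intro k; exact (layer_nonempty (layerP _) (@stage_successor_closed k)
                      (ex_intro _ v (Hout k))). }
  destruct (choice _ Hne) as [g Hg].
  apply K_not_into_V; exists g.
  intros j k Hjk; apply (layers_disjoint (Hg j)); rewrite Hjk; exact (Hg k).
Qed.

Theorem stratification_morphism : has_morphism E (lex_prod EU ltK).
Proof.
  destruct (choice _ layer_cover) as [lvl Hlvl].
  exists (fun v => (psi (stage (lvl v)) v, lvl v)).
  intros v c w Hvw; unfold lex_prod; simpl.
  destruct (ltK_total (lvl w) (lvl v)) as [H | [H | H]].
  - left; exact H.
  - right; split; [symmetry; exact H |].
    rewrite H; apply (layer_morphism (layerP _) (Hlvl v)); [| exact Hvw].
    rewrite <- H; exact (Hlvl w).
  - destruct (layer_edge_level (Hlvl v) Hvw (Hlvl w) H).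
Qed.

End Stratification.

Theorem lemma3p8 (C : Type) (W : (nat -> C) -> Prop) (K : Type) (ltK : K -> K -> Prop)
  (VU : Type) (EU : VU -> C -> VU -> Prop) :
  prefix_independent W ->
  is_cardinal ltK ->
  is_graph EU ->
  almost_universal W ltK EU ->
  universal_pi W ltK (lex_prod EU ltK).
Proof.
  intros Hpi [ltK_trans [ltK_total [ltK_wf _]]] _ HU.
  split.
  - exact (satisfies_lex_prod Hpi ltK_wf (proj1 HU)).
  - intros V E t0 Htree HVK HW.
    destruct (layering_exists HU Htree HVK HW) as [layer [psi Hlayer]].
    exact (stratification_morphism ltK_trans ltK_total ltK_wf _ _ Hlayer (proj2 HVK)).
Qed.
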